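(* Let $X$ be a compact metric space, $f_1,f_2:X\to X$ continuous and $F=\{f_1,f_2\}$. Suppose $F$ has the (Hausdorff metric) shadowing property. Then $F$ is chain mixing if and only if $F$ is mixing.
   Context: Throughout, $(X,d)$ is a compact metric space, $\mathbb{N}=\{0,1,2,\dots\}$, $\mathbb{Z}^+=\{1,2,\dots\}$. $\mathbb{K}(X)$ is the set of nonempty compact subsets of $X$ with the Hausdorff metric $d_H(A,B)=\max\{\sup_{a\in A}\inf_{b\in B}d(a,b),\sup_{b\in B}\inf_{a\in A}d(a,b)\}$; a point $x$ is identified with $\{x\}$. Multiple mappings: $F=\{f_1,f_2\}$ maps $x$ to $F(x)=\{f_1(x),f_2(x)\}$; for $n\ge1$, $F^n(x)=\{f_{i_1}\cdots f_{i_n}(x): i_1,\dots,i_n\in\{1,2\}\}$, $F^0(x)=\{x\}$; for $A\in\mathbb{K}(X)$, $F^n(A)=\bigcup_{a\in A}F^n(a)$. Let $Ran(F)=\{F^n(x): n\ge1, x\in X\}\subset\mathbb{K}(X)$, with the topology induced by $d_H$. Shadowing: a sequence $\{A_n\}_{n\ge0}\subset\mathbb{K}(X)$ with $A_0$ a singleton is a $\delta$-pseudo orbit of $F$ if $d_H(F(A_n),A_{n+1})\le\delta$ for all $n\in\mathbb{N}$. $F$ has the shadowing property if for every $\epsilon>0$ there is $\delta>0$ such that for every $\delta$-pseudo orbit $\{A_n\}$ there is $y\in X$ with $d_H(F^n(y),A_n)<\epsilon$ for all $n\in\mathbb{N}$. A $\delta$-chain of $F$ from $x\in X$ to $A\in\mathbb{K}(X)$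 of length $m$ is a finite sequence $A_0=\{x\},A_1,\dots,A_m=A$ in $\mathbb{K}(X)$ with $d_H(F(A_i),A_{i+1})\le\delta$ for $0\le i<m$. $F$ is mixing if for all nonempty open $U\subset X$ and nonempty open $\mathcal U\subset Ran(F)$ there is $N\in\mathbb{Z}^+$ such that $\{F^n(u):u\in U\}\cap\mathcal U\ne\emptyset$ for all $n\ge N$. $F$ is chain mixing if for all $x\in X$, $A\in Ran(F)$ and $\delta>0$ there is $N\in\mathbb{Z}^+$ such that for every $n\ge N$ there is a $\delta$-chain of $F$ from $x$ to $A$ of length $n$. *)

From Stdlib Require List.
From HB Require Import structures.
From mathcomp Require Import all_boot all_order all_algebra.
From mathcomp Require Import boolp classical_sets reals.
Set Implicit Arguments. Unset Strict Implicit. Unset Printing Implicit Defensive.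
Import Order.TTheory GRing.Theory Num.Theory.
Local Open Scope classical_set_scope.
Local Open Scope ring_scope.

Section Defs.
Context {R : realType} {X : Type} (d : X -> X -> R).

Definition is_metric : Prop :=
  (forall x y, 0 <= d x y) /\ (forall x y, d x y = 0 <-> x = y) /\
  (forall x y, d x y = d y x) /\ (forall x y z, d x z <= d x y + d y z).

Definition mopen (U : set X) : Prop :=
  forall x, U x -> exists r, 0 < r /\ forall y, d x y < r -> U y.

Definition mcompact (A : set X) : Prop :=
  forall (I : Type) (G : I -> set X), (forall i, mopen (G i)) ->
    (forall a, A a -> exists i, G i a) ->
    exists s : list I, forall a, A a -> exists i, List.In i s /\ G i a.

Definition mcontinuous (f : X -> X) : Prop :=
  forall x e, 0 < e -> exists r, 0 < r /\ forall y, d x y < r -> d (f x) (f y) < e.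

Definition KX (A : set X) : Prop := A !=set0 /\ mcompact A.

Definition hdist (A B : set X) : R :=
  Num.max (sup [set inf [set d a b | b in B] | a in A])
          (sup [set inf [set d a b | a in A] | b in B]).

Variables f1 f2 : X -> X.

Definition Fset (A : set X) : set X := [set y | exists2 a, A a & (y = f1 a \/ y = f2 a)].

Fixpoint Fn (n : nat) (x : X) : set X :=
  match n with
  | O => [set x]
  | S m => Fset (Fn m x)
  end.

Definition RanF : set (set X) := [set A | exists n x, (1 <= n)%N /\ A = Fn n x].

Definition ran_open (U : set (set X)) : Prop :=
  U `<=` RanF /\
  forall A, U A -> exists r, 0 < r /\ forall B, RanF B -> hdist A B < r -> U B.

Definition pseudo_orbit (delta : R) (A : nat -> set X) : Prop :=
  (exists x, A 0%N = [set x]) /\ (forall n, KX (A n)) /\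
  (forall n, hdist (Fset (A n)) (A n.+1) <= delta).

Definition shadowing : Prop :=
  forall eps, 0 < eps -> exists delta, 0 < delta /\
    forall A, pseudo_orbit delta A ->
      exists y, forall n, hdist (Fn n y) (A n) < eps.

Definition chain (delta : R) (x : X) (A : set X) (m : nat) : Prop :=
  exists B : nat -> set X,
    B 0%N = [set x] /\ B m = A /\ (forall i, (i <= m)%N -> KX (B i)) /\
    (forall i, (i < m)%N -> hdist (Fset (B i)) (B i.+1) <= delta).

Definition mixing : Prop :=
  forall (U : set X) (V : set (set X)),
    mopen U -> U !=set0 -> ran_open V -> V !=set0 ->
    exists N, (1 <= N)%N /\ forall n, (N <= n)%N -> exists2 u, U u & V (Fn n u).

Definition chain_mixing : Prop :=
  forall x A delta, RanF A -> 0 < delta ->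
    exists N, (1 <= N)%N /\ forall n, (N <= n)%N -> chain delta x A n.

End Defs.

From mathcomp Require Import all_boot all_order all_algebra.
From mathcomp Require Import boolp classical_sets reals.
From mathcomp Require Import lra.
From Stdlib Require List.
Set Implicit Arguments. Unset Strict Implicit. Unset Printing Implicit Defensive.
Import Order.TTheory GRing.Theory Num.Theory.
Local Open Scope classical_set_scope.
Local Open Scope ring_scope.

(* Each F^n(x) is finite.
   Chain mixing implies mixing: for x in U and A = F^m(x') in V, the pseudo
   orbit that follows a delta-chain from x to A for n steps and then the true
   orbit of x' is shadowed by some y, which lies near x with F^n(y) near A.
   Mixing implies chain mixing: mixing applied to a small ball around x and a
   d_H-ball around A gives u near x with F^n(u) near A; then
   {x}, F(u), ..., F^(n-1)(u), A is a delta-chain, its first step controlled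
   by the continuity of f1 and f2 at x. *)

Lemma list_argmax (R : realType) (T : Type) (g : T -> R) (a : T) (l : list T) :
  exists2 b, List.In b (a :: l) & forall y, List.In y (a :: l) -> g y <= g b.
Proof.
elim: l => [|c l [b Hb bmax]]; first by exists a => [|y [<-|[]]]; [left|].
have [gcb|gbc] := leP (g c) (g b).
  exists b; first by case: Hb => [<-|Hb]; [left|right; right].
  by move=> y /= [<-|[<-|Hy]] //; apply: bmax; [left|right].
exists c; first by right; left.
by move=> y /= [<-|[<-|Hy]] //; apply/(le_trans _ (ltW gbc))/bmax; [left|right].
Qed.

Section FiniteSets.
Variables (R : realType) (X : Type).

Definition fin_ne (S : set X) :=
  (exists l : list X, forall y, S y <-> List.In y l) /\ S !=set0.

Lemma sup_fin_lt (S : set X) (g : X -> R) e : fin_ne S ->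
  sup [set g a | a in S] < e <-> (forall a, S a -> g a < e).
Proof.
move=> [[l Hl] [a0 Sa0]].
have memS y : S y <-> List.In y (a0 :: l).
  by split=> [/Hl ly|[<-|/Hl]] //; right.
have [b /memS Sb bmax] := list_argmax g a0 l.
have ub a : S a -> g a <= g b by move/memS; apply: bmax.
split=> [hs a Sa | H].
  apply: le_lt_trans hs; apply: ub_le_sup; last by exists a.
  by exists (g b) => _ [c Sc <-]; apply: ub.
apply: le_lt_trans (H b Sb); apply: ge_sup; first by exists (g a0), a0.
by move=> _ [c Sc <-]; apply: ub.
Qed.

Lemma inf_nonneg_lt (S : set X) (g : X -> R) e : S !=set0 ->
  (forall a, 0 <= g a) ->
  inf [set g a | a in S] < e <-> exists2 a, S a & g a < e.
Proof.
move=> [a0 Sa0] g_ge0; split.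
  by case/inf_lt => [|_ [a Sa <-] ga]; [exists (g a0), a0 | exists a].
move=> [a Sa ga]; apply: le_lt_trans ga; apply: ge_inf; last by exists a.
by exists 0 => _ [c _ <-].
Qed.

Lemma fin_ne_set1 x : fin_ne [set x].
Proof.
split; last by exists x.
by exists [:: x] => y /=; split=> [->|[->|[]]]; [left|].
Qed.

Lemma fin_ne_KX (d : X -> X -> R) S : fin_ne S -> KX d S.
Proof.
move=> [[l Hl] ne]; split=> // I G _ cover.
suff [s Hs] : exists s : list I,
    forall a, List.In a l -> exists i, List.In i s /\ G i a.
  by exists s => a /Hl; apply: Hs.
have {}cover a : List.In a l -> exists i, G i a by move/Hl; apply: cover.
elim: l {Hl} cover => [|a l IH] cover; first by exists nil.
have [s Hs] := IH (fun y ly => cover y (or_intror ly)).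
have [i Gia] := cover a (or_introl erefl).
exists (i :: s) => y /= [<-|ly]; first by exists i; split=> //; left.
by have [j [js Gjy]] := Hs y ly; exists j; split=> //; right.
Qed.

End FiniteSets.

Section HausdorffFinite.
Variables (R : realType) (X : Type) (d : X -> X -> R).
Hypothesis d_metric : is_metric d.

Let d_ge0 x y : 0 <= d x y. Proof. by case: d_metric. Qed.
Let d_sym x y : d x y = d y x. Proof. by case: d_metric => _ [_ []]. Qed.
Let d_triangle x y z : d x z <= d x y + d y z.
Proof. by case: d_metric => _ [_ []]. Qed.
Let d_xx x : d x x = 0. Proof. by case: d_metric => _ [h _]; apply/h. Qed.

Definition hclose (A B : set X) (e : R) :=
  (forall a, A a -> exists2 b, B b & d a b < e) /\
  (forall b, B b -> exists2 a, A a & d a b < e).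

Lemma hdist_lt_hclose A B e : fin_ne A -> fin_ne B ->
  hdist d A B < e <-> hclose A B e.
Proof.
move=> fA fB; rewrite /hdist /hclose gt_max.
have supA := sup_fin_lt (fun a => inf [set d a b | b in B]) e fA.
have supB := sup_fin_lt (fun b => inf [set d a b | a in A]) e fB.
have infB a := @inf_nonneg_lt _ _ B (d a) e fB.2 (d_ge0 a).
have infA b := @inf_nonneg_lt _ _ A (d^~ b) e fA.2 (d_ge0^~ b).
split=> [/andP[/supA h1 /supB h2] | [h1 h2]].
  by split=> [a /h1/infB | b /h2/infA].
by apply/andP; split; [apply/supA => a /h1/infB | apply/supB => b /h2/infA].
Qed.

Lemma hclose_sym A B e : hclose A B e -> hclose B A e.
Proof.
by move=> [h1 h2]; split=> [b /h2 [a]|a /h1 [b]]; [exists a|exists b];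
  rewrite // d_sym.
Qed.

Lemma hclose_refl A e : 0 < e -> hclose A A e.
Proof. by move=> e_gt0; split=> a Aa; exists a; rewrite // d_xx. Qed.

Lemma hclose_trans A B C e1 e2 :
  hclose A B e1 -> hclose B C e2 -> hclose A C (e1 + e2).
Proof.
move=> [h1 h2] [k1 k2]; split.
  move=> a /h1 [b /k1 [c Cc hbc] hab].
  by exists c => //; apply: le_lt_trans (d_triangle a b c) (ltrD hab hbc).
move=> c /k2 [b /h2 [a Aa hab] hbc].
by exists a => //; apply: le_lt_trans (d_triangle a b c) (ltrD hab hbc).
Qed.

Lemma hdist_lt_sym A B e : fin_ne A -> fin_ne B ->
  hdist d A B < e -> hdist d B A < e.
Proof.
by move=> fA fB /hdist_lt_hclose-/(_ fA fB)/hclose_sym/hdist_lt_hclose; apply.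
Qed.

Lemma hdist_self_lt A e : fin_ne A -> 0 < e -> hdist d A A < e.
Proof. by move=> fA e_gt0; apply/hdist_lt_hclose/hclose_refl. Qed.

Lemma ball_mopen x r : mopen d [set u | d x u < r].
Proof.
move=> u /= xu; exists (r - d x u); split; first by rewrite subr_gt0.
move=> z uz /=; apply: le_lt_trans (d_triangle x u z) _; lra.
Qed.

End HausdorffFinite.

Section Dynamics.
Variables (R : realType) (X : Type) (d : X -> X -> R) (f1 f2 : X -> X).
Hypothesis d_metric : is_metric d.

Notation F := (Fset f1 f2).
Notation Fn := (Fn f1 f2).

Lemma fin_ne_Fset S : fin_ne S -> fin_ne (F S).
Proof.
move=> [[l Hl] [a Sa]]; split; last by exists (f1 a), a; [|left].
exists (List.flat_map (fun a => [:: f1 a; f2 a]) l) => y.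
rewrite List.in_flat_map; split.
  by move=> [b /Hl Sb [->|->]]; exists b; split=> //; [left|right; left].
by move=> [b [/Hl Sb /= [<-|[<-|[]]]]]; exists b => //; [left|right].
Qed.

Lemma fin_ne_Fn n x : fin_ne (Fn n x).
Proof. by elim: n => [|n IH] /=; [apply: fin_ne_set1 | apply: fin_ne_Fset]. Qed.

Lemma fin_ne_RanF A : RanF f1 f2 A -> fin_ne A.
Proof. by move=> [n [x [_ ->]]]; apply: fin_ne_Fn. Qed.

Lemma hdist_Fset1_le x u e : d (f1 x) (f1 u) < e -> d (f2 x) (f2 u) < e ->
  hdist d (F [set x]) (F [set u]) <= e.
Proof.
move=> h1 h2; apply/ltW/hdist_lt_hclose => //; try exact/fin_ne_Fset/fin_ne_set1.
split=> _ [_ -> [->|->]].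
- by exists (f1 u); [exists u => //; left|].
- by exists (f2 u); [exists u => //; right|].
- by exists (f1 x); [exists x => //; left|].
- by exists (f2 x); [exists x => //; right|].
Qed.

Lemma ran_ball_open A delta : RanF f1 f2 A ->
  ran_open d f1 f2 [set C | RanF f1 f2 C /\ hdist d A C < delta].
Proof.
move=> RA; split=> [C []//|C [RC AC]].
set h := hdist d A C; exists ((delta - h) / 2); split.
  by rewrite divr_gt0 // subr_gt0.
move=> D RD CD; split=> //.
have fA := fin_ne_RanF RA; have fC := fin_ne_RanF RC; have fD := fin_ne_RanF RD.
have cAC : hclose d A C (h + (delta - h) / 2).
  by apply/hdist_lt_hclose => //; rewrite /h; lra.
have /(hclose_trans d_metric cAC) := proj1 (hdist_lt_hclose d_metric _ fC fD) CD.
have -> : h + (delta - h) / 2 + (delta - h) / 2 = delta by lra.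
by move/hdist_lt_hclose; apply.
Qed.

Lemma chain_orbit_pseudo_orbit delta x x' m n : 0 < delta -> (0 < n)%N ->
  chain d f1 f2 delta x (Fn m x') n ->
  exists P, [/\ pseudo_orbit d f1 f2 delta P, P 0%N = [set x] & P n = Fn m x'].
Proof.
move=> delta_gt0 n_gt0 [B [B0 [Bn [BK Bstep]]]].
pose P k := if (k < n)%N then B k else Fn (m + (k - n)) x'.
exists P; split; rewrite /P ?n_gt0 ?ltnn ?subnn ?addn0 //.
split; first by exists x; rewrite /P n_gt0.
split=> k.
  by case: ltnP => k_n; [apply/BK/ltnW | apply/fin_ne_KX/fin_ne_Fn].
case: (ltnP k.+1 n) => [k1_n|n_k1].
  by rewrite (ltnW k1_n); apply/Bstep/ltnW.
case: (ltnP k n) => [k_n|n_k].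
  have Sk : n = k.+1 by apply/eqP; rewrite eqn_leq k_n n_k1.
  by rewrite -{1}Sk subnn addn0 -Bn Sk; apply: Bstep; rewrite -Sk.
rewrite subSn // addnS /=; apply/ltW/hdist_self_lt => //.
exact/fin_ne_Fset/fin_ne_Fn.
Qed.

Lemma chain_via_orbit delta x u A n : 0 < delta -> (1 < n)%N -> fin_ne A ->
  hdist d (F [set x]) (F [set u]) <= delta -> hdist d (Fn n u) A <= delta ->
  chain d f1 f2 delta x A n.
Proof.
move=> delta_gt0 n_gt1 fA first_step last_step.
have n_gt0 : (0 < n)%N by apply: ltnW.
pose B i := if i == 0%N then [set x] else if (i < n)%N then Fn i u else A.
exists B; split=> //; split; first by rewrite /B gtn_eqF // ltnn.
split=> i i_n; rewrite /B.
  case: eqP => _; first exact/fin_ne_KX/fin_ne_set1.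
  by case: ifP => _; [exact/fin_ne_KX/fin_ne_Fn | exact/fin_ne_KX].
case: eqP => [-> /=|/eqP i_neq0]; first by rewrite n_gt1.
rewrite i_n.
case: ltnP => [Si_n|n_Si].
  exact/ltW/(hdist_self_lt d_metric)/delta_gt0/fin_ne_Fset/fin_ne_Fn.
have Si : i.+1 = n by apply/eqP; rewrite eqn_leq i_n n_Si.
by move: last_step; rewrite -Si.
Qed.

Lemma chain_mixing_mixing :
  shadowing d f1 f2 -> chain_mixing d f1 f2 -> mixing d f1 f2.
Proof.
move=> shadow cmix U V Uopen [x Ux] [VRan Vopen] [A VA].
have [r [r_gt0 ballU]] := Uopen x Ux.
have [r' [r'_gt0 ballV]] := Vopen A VA.
have RA := VRan A VA; have [m [x' [_ eA]]] := RA.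
have min_gt0 : 0 < Num.min r r' by rewrite lt_min r_gt0 r'_gt0.
have [delta [delta_gt0 shadowP]] := shadow _ min_gt0.
have [N [N_gt0 chains]] := cmix x A delta RA delta_gt0.
rewrite eA in chains.
exists N; split=> // n N_n; have n_gt0 := leq_trans N_gt0 N_n.
have [P [PO P0 Pn]] :=
  chain_orbit_pseudo_orbit delta_gt0 n_gt0 (chains n N_n).
have [y near] := shadowP P PO.
exists y.
  apply: ballU; have := near 0%N; rewrite P0.
  move/(hdist_lt_sym d_metric (fin_ne_set1 _) (fin_ne_set1 _)).
  case/(hdist_lt_hclose d_metric _ (fin_ne_set1 x) (fin_ne_set1 y)).
  by move=> /(_ x erefl) [_ -> xy] _; move: xy; rewrite lt_min => /andP[].
apply: ballV; first by exists n, y.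
rewrite eA; apply: (hdist_lt_sym d_metric (fin_ne_Fn _ _) (fin_ne_Fn _ _)).
by rewrite -Pn; apply: lt_le_trans (near n) _; rewrite ge_min lexx orbT.
Qed.

Lemma mixing_chain_mixing : mcontinuous d f1 -> mcontinuous d f2 ->
  mixing d f1 f2 -> chain_mixing d f1 f2.
Proof.
move=> cont1 cont2 mix x A delta RA delta_gt0.
have [r1 [r1_gt0 near1]] := cont1 x delta delta_gt0.
have [r2 [r2_gt0 near2]] := cont2 x delta delta_gt0.
have Une : [set u | d x u < Num.min r1 r2] !=set0.
  exists x; rewrite /= (proj2 (proj1 (proj2 d_metric) x x) erefl).
  by rewrite lt_min r1_gt0 r2_gt0.
have Vne : [set C | RanF f1 f2 C /\ hdist d A C < delta] !=set0.
  by exists A; split=> //; apply: hdist_self_lt (fin_ne_RanF RA) _.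
have [N [N_gt0 orbits]] :=
  mix _ _ (@ball_mopen _ _ _ d_metric x _) Une (ran_ball_open delta RA) Vne.
exists (maxn N 2); split; first by rewrite leq_max N_gt0.
move=> n; rewrite geq_max => /andP [N_n n_gt1].
have [u /= xu [_ uA]] := orbits n N_n.
move: xu; rewrite lt_min => /andP [xu1 xu2].
apply: (chain_via_orbit (u := u)) => //.
- exact: fin_ne_RanF.
- exact: hdist_Fset1_le (near1 _ xu1) (near2 _ xu2).
- exact/ltW/(hdist_lt_sym d_metric (fin_ne_RanF RA) (fin_ne_Fn _ _)).
Qed.

End Dynamics.

Theorem theorem5p1 (R : realType) (X : Type) (d : X -> X -> R)
  (f1 f2 : X -> X) :
  is_metric d -> mcompact d setT ->
  mcontinuous d f1 -> mcontinuous d f2 ->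
  shadowing d f1 f2 ->
  (chain_mixing d f1 f2 <-> mixing d f1 f2).
Proof.
move=> d_metric _ cont1 cont2 shadow; split.
- exact: chain_mixing_mixing.
- exact: mixing_chain_mixing.
Qed.
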